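(* Let $\mathcal{A}$ be a finite-dimensional $\mathbb{C}^*$-weak Hopf algebra, $\rho:\mathcal{A}\to M_{d_\rho}(\mathbb{C})$ a $*$-representation and $(v_{ij})_{1\le i,j\le d_v}$ a corepresentation with $S(v_{ij})=v_{ji}^*$. Define $P$ on $\mathbb{C}^{d_v}\otimes\mathbb{C}^{d_\rho}$ and $Q$ on $\mathbb{C}^{d_\rho}\otimes\mathbb{C}^{d_v}$ by $\langle i,a|P|j,b\rangle=\sum\epsilon(1_{(1)}v_{ij})\rho_{ab}(1_{(2)})$ and $\langle a,i|Q|b,j\rangle=\sum\rho_{ab}(1_{(1)})\epsilon(v_{ij}1_{(2)})$, where $\Delta(1)=\sum1_{(1)}\otimes1_{(2)}$. Then on $\mathbb{C}^{d_v}\otimes\mathbb{C}^{d_\rho}\otimes\mathbb{C}^{d_v}$ one has $(P\otimes\mathbb{1})(\mathbb{1}\otimes Q)=(\mathbb{1}\otimes Q)(P\otimes\mathbb{1})$, and on $\mathbb{C}^{d_\rho}\otimes\mathbb{C}^{d_v}\otimes\mathbb{C}^{d_\rho}$ one has $(Q\otimes\mathbb{1})(\mathbb{1}\otimes P)=(\mathbb{1}\otimes P)(Q\otimes\mathbb{1})$.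
   Context: A weak bialgebra is a finite-dimensional unital associative algebra and coassociative counital coalgebra with $\Delta(xy)=\Delta(x)\Delta(y)$, $\Delta^{(2)}(1)=(1\otimes\Delta(1))(\Delta(1)\otimes1)=(\Delta(1)\otimes1)(1\otimes\Delta(1))$ and $\epsilon(xyz)=\sum\epsilon(xy_{(1)})\epsilon(y_{(2)}z)=\sum\epsilon(xy_{(2)})\epsilon(y_{(1)}z)$. With $\epsilon_s(x)=\sum1_{(1)}\epsilon(x1_{(2)})$, $\epsilon_t(x)=\sum\epsilon(1_{(1)}x)1_{(2)}$, a weak Hopf algebra has a linear $S$ with $\sum S(x_{(1)})x_{(2)}=\epsilon_s(x)$, $\sum x_{(1)}S(x_{(2)})=\epsilon_t(x)$, $\sum S(x_{(1)})x_{(2)}S(x_{(3)})=S(x)$. A $\mathbb{C}^*$-weak Hopf algebra has an antilinear involution $*$ with $(xy)^*=y^*x^*$, $\Delta(x^* )=\Delta(x)^*$, and a faithful $*$-representation. A $*$-representation satisfies $\rho(x^* )=\rho(x)^\dagger$; a corepresentation satisfies $\Delta(v_{ij})=\sum_kv_{ik}\otimes v_{kj}$, $\epsilon(v_{ij})=\delta_{ij}$. *)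

From HB Require Import structures.
From mathcomp Require Import all_boot all_order all_algebra.
From mathcomp Require Import reals complex.
Set Implicit Arguments. Unset Strict Implicit. Unset Printing Implicit Defensive.
Import Order.TTheory GRing.Theory Num.Theory.
Local Open Scope ring_scope.

(* A finite-dimensional algebra A of dimension n is identified with 'rV[C]_n
   via a fixed basis e_0..e_{n-1}; A (x) A with 'M[C]_(n,n) (e_j (x) e_k is
   delta_mx j k) and A (x) A (x) A with {ffun 'I_n * 'I_n * 'I_n -> C}. *)

Section WHA.
Variables (R : realType) (n : nat).
Local Notation C := (R[i]).
Local Notation A := 'rV[C]_n.
Local Notation A2 := 'M[C]_(n, n).
Local Notation A3 := {ffun 'I_n * 'I_n * 'I_n -> C}.

Definition bvec (j : 'I_n) : A := delta_mx 0 j.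

Definition tens2 (a b : A) : A2 := \matrix_(p, q) (a 0 p * b 0 q).
Definition tens3 (a b c : A) : A3 := [ffun t => a 0 t.1.1 * b 0 t.1.2 * c 0 t.2].
Definition tens21 (X : A2) (c : A) : A3 := [ffun t => X t.1.1 t.1.2 * c 0 t.2].
Definition tens12 (a : A) (X : A2) : A3 := [ffun t => a 0 t.1.1 * X t.1.2 t.2].

Record WHAdata := {
  wmul : A -> A -> A;
  wone : A;
  wcomul : A -> A2;
  weps : A -> C;
  wS : A -> A;
  wstar : A -> A
}.

Variable W : WHAdata.
Local Notation mul := (wmul W).
Local Notation one := (wone W).
Local Notation Dl := (wcomul W).
Local Notation eps := (weps W).
Local Notation S := (wS W).
Local Notation star := (wstar W).

Definition mul2 (X Y : A2) : A2 :=
  \sum_(j < n) \sum_(k < n) \sum_(l < n) \sum_(m < n)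
    (X j k * Y l m) *: tens2 (mul (bvec j) (bvec l)) (mul (bvec k) (bvec m)).
Definition mul3 (T U : A3) : A3 :=
  \sum_(s : 'I_n * 'I_n * 'I_n) \sum_(u : 'I_n * 'I_n * 'I_n)
    (T s * U u) *: tens3 (mul (bvec s.1.1) (bvec u.1.1))
                         (mul (bvec s.1.2) (bvec u.1.2))
                         (mul (bvec s.2) (bvec u.2)).
Definition comulL (X : A2) : A3 :=
  \sum_(j < n) \sum_(k < n) X j k *: tens21 (Dl (bvec j)) (bvec k).
Definition comulR (X : A2) : A3 :=
  \sum_(j < n) \sum_(k < n) X j k *: tens12 (bvec j) (Dl (bvec k)).
Definition comul2 (x : A) : A3 := comulL (Dl x).

(* sums x_(1) (x) x_(2) are expanded over the basis: Delta x = sum X j k e_j(x)e_k *)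
Definition eps_s (x : A) : A :=
  \sum_(j < n) \sum_(k < n) (Dl one j k * eps (mul x (bvec k))) *: bvec j.
Definition eps_t (x : A) : A :=
  \sum_(j < n) \sum_(k < n) (Dl one j k * eps (mul (bvec j) x)) *: bvec k.

Definition star2 (X : A2) : A2 :=
  \sum_(j < n) \sum_(k < n) (X j k)^* *: tens2 (star (bvec j)) (star (bvec k)).

Definition is_algebra : Prop :=
  [/\ (forall x y z, mul (mul x y) z = mul x (mul y z)),
      (forall x, mul one x = x /\ mul x one = x),
      (forall a x y z, mul (a *: x + y) z = a *: mul x z + mul y z) &
      (forall a x y z, mul z (a *: x + y) = a *: mul z x + mul z y)].

Definition is_coalgebra : Prop :=
  [/\ linear Dl, linear eps,
      (forall x, comulL (Dl x) = comulR (Dl x)) &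
      (forall x, \row_(k < n) (\sum_(j < n) eps (bvec j) * Dl x j k) = x
                 /\ \row_(j < n) (\sum_(k < n) Dl x j k * eps (bvec k)) = x)].

Definition is_weak_bialgebra : Prop :=
  [/\ is_algebra /\ is_coalgebra,
      (forall x y, Dl (mul x y) = mul2 (Dl x) (Dl y)),
      comul2 one = mul3 (tens12 one (Dl one)) (tens21 (Dl one) one),
      comul2 one = mul3 (tens21 (Dl one) one) (tens12 one (Dl one)) &
      (forall x y z,
         eps (mul (mul x y) z)
           = \sum_(j < n) \sum_(k < n) Dl y j k * eps (mul x (bvec j)) * eps (mul (bvec k) z)
         /\ eps (mul (mul x y) z)
           = \sum_(j < n) \sum_(k < n) Dl y j k * eps (mul x (bvec k)) * eps (mul (bvec j) z))].

Definition is_weak_Hopf : Prop :=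
  [/\ is_weak_bialgebra, linear S,
      (forall x, \sum_(j < n) \sum_(k < n) Dl x j k *: mul (S (bvec j)) (bvec k) = eps_s x),
      (forall x, \sum_(j < n) \sum_(k < n) Dl x j k *: mul (bvec j) (S (bvec k)) = eps_t x) &
      (forall x, \sum_(t : 'I_n * 'I_n * 'I_n)
                   comul2 x t *: mul (mul (S (bvec t.1.1)) (bvec t.1.2)) (S (bvec t.2)) = S x)].

Definition adjmx d (M : 'M[C]_d) : 'M[C]_d := (map_mx (fun z => z^*) M)^T.

Definition is_star_rep d (rho : A -> 'M[C]_d) : Prop :=
  [/\ linear rho,
      (forall x y, rho (mul x y) = rho x *m rho y) &
      (forall x, rho (star x) = adjmx (rho x))].

Definition is_Cstar_WHA : Prop :=
  [/\ is_weak_Hopf /\ (forall a x y, star (a *: x + y) = a^* *: star x + star y),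
      (forall x, star (star x) = x),
      (forall x y, star (mul x y) = mul (star y) (star x)),
      (forall x, Dl (star x) = star2 (Dl x)) &
      exists d (rho : A -> 'M[C]_d), is_star_rep rho /\ injective rho].

Definition is_corep dv (v : 'I_dv -> 'I_dv -> A) : Prop :=
  forall i j, Dl (v i j) = \sum_(k < dv) tens2 (v i k) (v k j)
              /\ eps (v i j) = (i == j)%:R.

Definition Pop dv dr (v : 'I_dv -> 'I_dv -> A) (rho : A -> 'M[C]_dr)
  (x y : 'I_dv * 'I_dr) : C :=
  \sum_(p < n) \sum_(q < n)
     Dl one p q * eps (mul (bvec p) (v x.1 y.1)) * rho (bvec q) x.2 y.2.
Definition Qop dv dr (v : 'I_dv -> 'I_dv -> A) (rho : A -> 'M[C]_dr)
  (x y : 'I_dr * 'I_dv) : C :=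
  \sum_(p < n) \sum_(q < n)
     Dl one p q * rho (bvec p) x.1 y.1 * eps (mul (v x.2 y.2) (bvec q)).

End WHA.

Definition opcomp (R : realType) (T : finType) (X Y : T -> T -> R[i]) (x z : T) : R[i] :=
  \sum_(y : T) X x y * Y y z.

Definition op_tens_id (R : realType) (I J K : finType) (X : I * J -> I * J -> R[i])
  (x y : I * J * K) : R[i] := X x.1 y.1 * (x.2 == y.2)%:R.
Definition id_tens_op (R : realType) (I J K : finType) (X : J * K -> J * K -> R[i])
  (x y : I * J * K) : R[i] := (x.1.1 == y.1.1)%:R * X (x.1.2, x.2) (y.1.2, y.2).

From HB Require Import structures.
From mathcomp Require Import all_boot all_order all_algebra.
From mathcomp Require Import reals complex.
From mathcomp Require Import ring.
Set Implicit Arguments. Unset Strict Implicit. Unset Printing Implicit Defensive.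
Import GRing.Theory Num.Theory.
Local Open Scope ring_scope.

(* Write 1_(1) (x) 1_(2) and 1'_(1) (x) 1'_(2) for two copies of Delta(1).
   Summing over the middle index, multiplicativity of rho shows that the
   coefficients of (P (x) 1)(1 (x) Q) and of (1 (x) Q)(P (x) 1) are the values
   of the functional eps(. v_ij) (x) rho_ab (x) eps(v_kl .) at
   (Delta(1) (x) 1)(1 (x) Delta(1)) and at (1 (x) Delta(1))(Delta(1) (x) 1);
   both equal Delta^(2)(1) by the weak bialgebra axiom.  For the second
   identity, Delta(v_ij) = sum_k v_ik (x) v_kj and the two forms of the weak
   multiplicativity of eps turn the sum over the middle index, on either side,
   into eps(1'_(1) v_ij 1_(2)), so both coefficients equal
   sum rho_ab(1_(1)) eps(1'_(1) v_ij 1_(2)) rho_a'b'(1'_(2)). *)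

Lemma sum_triple (V : nmodType) (I J K : finType) (F : I * J * K -> V) :
  \sum_t F t = \sum_i \sum_j \sum_k F (i, j, k).
Proof.
rewrite (pair_bigA _ (fun i j => \sum_k F (i, j, k))).
rewrite (pair_bigA _ (fun ij k => F (ij.1, ij.2, k))).
by apply: eq_bigr => -[[i j] k].
Qed.

Lemma exchange_big4 (V : nmodType) (I1 I2 I3 I4 : finType)
    (F : I1 -> I2 -> I3 -> I4 -> V) :
  \sum_a \sum_b \sum_c \sum_d F a b c d = \sum_c \sum_d \sum_b \sum_a F a b c d.
Proof.
under eq_bigr => a _ do rewrite exchange_big.
rewrite exchange_big; apply: eq_bigr => c _.
under eq_bigr => a _ do rewrite exchange_big.
rewrite exchange_big; apply: eq_bigr => d _.
exact: exchange_big.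
Qed.

Section KernelComposition.
Variables (R : realType) (I J K : finType).
Local Notation C := R[i].
Variables (X : I * J -> I * J -> C) (Y : J * K -> J * K -> C).

Lemma opcomp_op_tens_id_id_tens_op x z :
  opcomp (op_tens_id X) (id_tens_op Y) x z
  = \sum_c X x.1 (z.1.1, c) * Y (c, x.2) (z.1.2, z.2).
Proof.
rewrite /opcomp /op_tens_id /id_tens_op sum_triple /=.
rewrite (bigD1 z.1.1) //= [X in _ + X]big1 ?addr0; last first.
  move=> y1 ny1; apply: big1 => y2 _; apply: big1 => y3 _.
  by rewrite eq_sym (negbTE ny1) /= !mul0r mulr0.
apply: eq_bigr => y2 _; rewrite (bigD1 x.2) //= [X in _ + X]big1 ?addr0.
  by rewrite !eqxx !mulr1 mul1r.
by move=> y3 ny3; rewrite eq_sym (negbTE ny3) /= !mulr0 mul0r.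
Qed.

Lemma opcomp_id_tens_op_op_tens_id x z :
  opcomp (id_tens_op Y) (op_tens_id X) x z
  = \sum_c Y (x.1.2, x.2) (c, z.2) * X (x.1.1, c) z.1.
Proof.
rewrite /opcomp /op_tens_id /id_tens_op sum_triple /=.
rewrite (bigD1 x.1.1) //= [X in _ + X]big1 ?addr0; last first.
  move=> y1 ny1; apply: big1 => y2 _; apply: big1 => y3 _.
  by rewrite eq_sym (negbTE ny1) /= !mul0r.
apply: eq_bigr => y2 _; rewrite (bigD1 z.2) //= [X in _ + X]big1 ?addr0.
  by rewrite !eqxx !mulr1 mul1r.
by move=> y3 ny3; rewrite (negbTE ny3) /= !mulr0.
Qed.

End KernelComposition.

Section Coordinates.
Variables (R : realType) (n : nat).
Local Notation C := R[i].
Local Notation A := 'rV[C]_n.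
Local Notation e := (@bvec R n).

Lemma linear_rowE (h : A -> C) x : linear h -> h x = \sum_j x 0 j * h (e j).
Proof.
move=> hl; pose hL : {linear A -> C} := HB.pack h (GRing.isLinear.Build _ _ _ _ h hl).
rewrite -[h x]/(hL x) {1}(row_sum_delta x) linear_sum.
by apply: eq_bigr => j _; rewrite linearZ.
Qed.

Definition tens2_eval (f g : A -> C) (X : 'M[C]_(n, n)) : C :=
  \sum_p \sum_q X p q * f (e p) * g (e q).

Definition tens3_eval (f g h : A -> C) (T : {ffun 'I_n * 'I_n * 'I_n -> C}) : C :=
  \sum_t T t * (f (e t.1.1) * g (e t.1.2) * h (e t.2)).

Lemma tens3_eval_tens3 f g h a b c : linear f -> linear g -> linear h ->
  tens3_eval f g h (tens3 a b c) = f a * g b * h c.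
Proof.
move=> fl gl hl; rewrite /tens3_eval sum_triple (linear_rowE a fl) !big_distrl.
apply: eq_bigr => p _; rewrite (linear_rowE b gl) big_distrr big_distrl.
apply: eq_bigr => q _; rewrite (linear_rowE c hl) big_distrr.
by apply: eq_bigr => r _; rewrite ffunE /=; ring.
Qed.

Lemma sum_tens2_eval_mul (I : finType) f h (G H : I -> A -> C) K X Y :
  (forall z y, \sum_c G c z * H c y = K z y) ->
  \sum_c tens2_eval f (G c) X * tens2_eval (H c) h Y
  = tens2_eval f (fun z => tens2_eval (K z) h Y) X.
Proof.
move=> GHK.
rewrite /tens2_eval; under eq_bigr => c _ do rewrite big_distrl.
rewrite exchange_big; apply: eq_bigr => p _.
under eq_bigr => c _ do rewrite big_distrl.
rewrite exchange_big; apply: eq_bigr => q _.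
under eq_bigr => c _ do rewrite big_distrr.
rewrite exchange_big big_distrr; apply: eq_bigr => p' _.
under eq_bigr => c _ do rewrite big_distrr.
rewrite exchange_big big_distrr; apply: eq_bigr => q' _.
rewrite /= -GHK big_distrr big_distrl big_distrr; apply: eq_bigr => c _ /=; ring.
Qed.

End Coordinates.

Section UnitalAlgebra.
Variables (R : realType) (n : nat) (W : WHAdata R n).
Local Notation C := R[i].
Local Notation A := 'rV[C]_n.
Local Notation e := (@bvec R n).
Local Notation mul := (wmul W).
Local Notation one := (wone W).

Hypothesis mulDl : forall a x y z, mul (a *: x + y) z = a *: mul x z + mul y z.
Hypothesis mulDr : forall a x y z, mul z (a *: x + y) = a *: mul z x + mul z y.
Hypothesis mul1 : forall x, mul one x = x /\ mul x one = x.

Lemma linear_comp_mulr (h : A -> C) c : linear h -> linear (fun y => h (mul y c)).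
Proof. by move=> hl a x y; rewrite mulDl hl. Qed.

Lemma linear_comp_mull (h : A -> C) c : linear h -> linear (fun y => h (mul c y)).
Proof. by move=> hl a x y; rewrite mulDr hl. Qed.

Lemma linear_mulr1_rowE (h : A -> C) y : linear h ->
  h y = \sum_j one 0 j * h (mul y (e j)).
Proof.
by move=> hl; rewrite -{1}[y](proj2 (mul1 y)) (linear_rowE one (linear_comp_mull y hl)).
Qed.

Lemma linear_mul1r_rowE (h : A -> C) y : linear h ->
  h y = \sum_j one 0 j * h (mul (e j) y).
Proof.
by move=> hl; rewrite -{1}[y](proj1 (mul1 y)) (linear_rowE one (linear_comp_mulr y hl)).
Qed.

Variables (f g h : A -> C).
Hypotheses (fl : linear f) (gl : linear g) (hl : linear h).

Lemma tens3_eval_mul3 T U : tens3_eval f g h (mul3 W T U) =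
  \sum_s \sum_u T s * U u *
     (f (mul (e s.1.1) (e u.1.1)) * g (mul (e s.1.2) (e u.1.2))
      * h (mul (e s.2) (e u.2))).
Proof.
rewrite /tens3_eval /mul3.
under eq_bigr => t _ do rewrite sum_ffunE big_distrl /=.
rewrite exchange_big; apply: eq_bigr => s _.
under eq_bigr => t _ do rewrite sum_ffunE big_distrl /=.
rewrite exchange_big; apply: eq_bigr => u _.
rewrite -tens3_eval_tens3 // /tens3_eval big_distrr.
by apply: eq_bigr => t _; rewrite !ffunE -scalerAl.
Qed.

Lemma tens3_eval_mul3_tens21_tens12 X Y :
  tens3_eval f g h (mul3 W (tens21 X one) (tens12 one Y))
  = tens2_eval f (fun z => tens2_eval (fun y => g (mul z y)) h Y) X.
Proof.
rewrite tens3_eval_mul3 sum_triple /tens2_eval.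
apply: eq_bigr => p _; apply: eq_bigr => q _.
under eq_bigr => s _ do rewrite sum_triple.
rewrite exchange_big4 mulr_sumr; apply: eq_bigr => p' _.
rewrite mulr_sumr; apply: eq_bigr => q' _.
rewrite (linear_mulr1_rowE (e p) fl) (linear_mul1r_rowE (e q') hl).
rewrite !(mulr_sumr, mulr_suml); apply: eq_bigr => u _.
rewrite mulr_sumr; apply: eq_bigr => s _; rewrite !ffunE /=; ring.
Qed.

End UnitalAlgebra.

Section OppositeAlgebra.
Variables (R : realType) (n : nat) (W : WHAdata R n).
Local Notation C := R[i].
Local Notation A := 'rV[C]_n.
Local Notation mul := (wmul W).
Local Notation one := (wone W).

Definition opposite_wha : WHAdata R n :=
  {| wmul := fun x y => mul y x; wone := one; wcomul := wcomul W;
     weps := weps W; wS := wS W; wstar := wstar W |}.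

Lemma mul3_opposite T U : mul3 opposite_wha T U = mul3 W U T.
Proof.
rewrite /mul3 exchange_big; apply: eq_bigr => u _.
by apply: eq_bigr => s _; rewrite mulrC.
Qed.

Hypothesis mulDl : forall a x y z, mul (a *: x + y) z = a *: mul x z + mul y z.
Hypothesis mulDr : forall a x y z, mul z (a *: x + y) = a *: mul z x + mul z y.
Hypothesis mul1 : forall x, mul one x = x /\ mul x one = x.

Lemma tens3_eval_mul3_tens12_tens21 (f g h : A -> C) X Y :
  linear f -> linear g -> linear h ->
  tens3_eval f g h (mul3 W (tens12 one Y) (tens21 X one))
  = tens2_eval f (fun z => tens2_eval (fun y => g (mul y z)) h Y) X.
Proof.
move=> fl gl hl; rewrite -mul3_opposite.
by apply: (tens3_eval_mul3_tens21_tens12 (W := opposite_wha)) => // x; case: (mul1 x).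
Qed.

End OppositeAlgebra.

Section PQCommutation.
Variables (R : realType) (n : nat) (W : WHAdata R n).
Local Notation C := R[i].
Local Notation A := 'rV[C]_n.
Local Notation e := (@bvec R n).
Local Notation mul := (wmul W).
Local Notation one := (wone W).
Local Notation Dl := (wcomul W).
Local Notation eps := (weps W).
Variables (dr dv : nat) (rho : A -> 'M[C]_dr) (v : 'I_dv -> 'I_dv -> A).

Lemma PopE i a j b : Pop W v rho (i, a) (j, b) =
  tens2_eval (fun z => eps (mul z (v i j))) (fun z => rho z a b) (Dl one).
Proof. by []. Qed.

Lemma QopE a i b j : Qop W v rho (a, i) (b, j) =
  tens2_eval (fun z => rho z a b) (fun z => eps (mul (v i j) z)) (Dl one).
Proof. by []. Qed.

Hypothesis mulDl : forall a x y z, mul (a *: x + y) z = a *: mul x z + mul y z.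
Hypothesis mulDr : forall a x y z, mul z (a *: x + y) = a *: mul z x + mul z y.
Hypothesis mul1 : forall x, mul one x = x /\ mul x one = x.
Hypothesis eps_linear : linear eps.
Hypothesis rho_linear : linear rho.
Hypothesis rho_mul : forall x y, rho (mul x y) = rho x *m rho y.
Hypothesis comul2_one_l :
  comul2 W one = mul3 W (tens12 one (Dl one)) (tens21 (Dl one) one).
Hypothesis comul2_one_r :
  comul2 W one = mul3 W (tens21 (Dl one) one) (tens12 one (Dl one)).

Lemma linear_rho_entry a b : linear (fun y => rho y a b).
Proof. by move=> c x y; rewrite rho_linear !mxE. Qed.

Lemma sum_rho_entry_mul x y a b : \sum_c rho x a c * rho y c b = rho (mul x y) a b.
Proof. by rewrite rho_mul mxE. Qed.

Lemma Pop_Qop_commute x z :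
  opcomp (op_tens_id (Pop W v rho)) (id_tens_op (Qop W v rho)) x z
  = opcomp (id_tens_op (Qop W v rho)) (op_tens_id (Pop W v rho)) x z.
Proof.
case: x z => [[i a] k] [[j b] l].
rewrite opcomp_op_tens_id_id_tens_op opcomp_id_tens_op_op_tens_id /=.
under eq_bigr => c _ do rewrite PopE QopE.
under [RHS]eq_bigr => c _ do rewrite PopE QopE mulrC.
rewrite (sum_tens2_eval_mul _ _ (K := fun z y => rho (mul z y) a b)); last first.
  by move=> z y; rewrite sum_rho_entry_mul.
rewrite [RHS](sum_tens2_eval_mul _ _ (K := fun z y => rho (mul y z) a b)); last first.
  by move=> z y; under eq_bigr => c _ do rewrite mulrC; rewrite sum_rho_entry_mul.
have linear_eps_mulr := linear_comp_mulr mulDl _ eps_linear.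
have linear_eps_mull := linear_comp_mull mulDr _ eps_linear.
have rho_ab_linear := linear_rho_entry a b.
rewrite -(tens3_eval_mul3_tens21_tens12 _ _ _ (g := fun y => rho y a b)) //.
rewrite -(tens3_eval_mul3_tens12_tens21 _ _ _ (g := fun y => rho y a b)) //.
by rewrite -comul2_one_r comul2_one_l.
Qed.

Hypothesis v_corep : is_corep W v.
Hypothesis eps_mul_weak : forall x y z,
  eps (mul (mul x y) z)
    = \sum_(j < n) \sum_(k < n) Dl y j k * eps (mul x (e j)) * eps (mul (e k) z)
  /\ eps (mul (mul x y) z)
    = \sum_(j < n) \sum_(k < n) Dl y j k * eps (mul x (e k)) * eps (mul (e j) z).

Lemma comul_corep_entry i j p q : Dl (v i j) p q = \sum_m v i m 0 p * v m j 0 q.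
Proof.
by rewrite (proj1 (v_corep i j)) summxE; apply: eq_bigr => m _; rewrite mxE.
Qed.

Lemma tens2_eval_comul_corep (g h : A -> C) i j : linear g -> linear h ->
  tens2_eval g h (Dl (v i j)) = \sum_m g (v i m) * h (v m j).
Proof.
move=> gl hl; rewrite /tens2_eval.
under eq_bigr => p _ do under eq_bigr => q _ do
  rewrite comul_corep_entry !mulr_suml.
under eq_bigr => p _ do rewrite exchange_big.
rewrite exchange_big; apply: eq_bigr => m _.
rewrite (linear_rowE (v i m) gl) (linear_rowE (v m j) hl) big_distrlr.
by apply: eq_bigr => p _; apply: eq_bigr => q _ /=; ring.
Qed.

Lemma eps_mul_corep x z i j :
  \sum_m eps (mul x (v i m)) * eps (mul (v m j) z) = eps (mul (mul x (v i j)) z).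
Proof.
rewrite -(tens2_eval_comul_corep (g := fun y => eps (mul x y)) (h := fun y => eps (mul y z))).
- by rewrite (proj1 (eps_mul_weak x (v i j) z)).
- exact: linear_comp_mull.
- exact: linear_comp_mulr.
Qed.

Lemma eps_mul_corep_swap x z i j :
  \sum_m eps (mul (v i m) z) * eps (mul x (v m j)) = eps (mul (mul x (v i j)) z).
Proof.
rewrite -(tens2_eval_comul_corep (g := fun y => eps (mul y z)) (h := fun y => eps (mul x y))).
- rewrite (proj2 (eps_mul_weak x (v i j) z)).
  by apply: eq_bigr => p _; apply: eq_bigr => q _; rewrite mulrAC.
- exact: linear_comp_mulr.
- exact: linear_comp_mull.
Qed.

Lemma Qop_Pop_commute x z :
  opcomp (op_tens_id (Qop W v rho)) (id_tens_op (Pop W v rho)) x z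
  = opcomp (id_tens_op (Pop W v rho)) (op_tens_id (Qop W v rho)) x z.
Proof.
case: x z => [[a i] b] [[a' j] b'].
rewrite opcomp_op_tens_id_id_tens_op opcomp_id_tens_op_op_tens_id /=.
under eq_bigr => c _ do rewrite PopE QopE.
under [RHS]eq_bigr => c _ do rewrite PopE QopE mulrC.
rewrite (sum_tens2_eval_mul _ _ (K := fun z y => eps (mul (mul y (v i j)) z))); last first.
  by move=> z y; rewrite eps_mul_corep_swap.
rewrite [RHS](sum_tens2_eval_mul _ _ (K := fun z y => eps (mul (mul y (v i j)) z))) //.
by move=> z y; under eq_bigr => c _ do rewrite mulrC; rewrite eps_mul_corep.
Qed.

End PQCommutation.

Theorem mainTheorem7 (R : realType) (n : nat) (W : WHAdata R n)
  (dr dv : nat) (rho : 'rV[R[i]]_n -> 'M[R[i]]_dr)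
  (v : 'I_dv -> 'I_dv -> 'rV[R[i]]_n) :
  is_Cstar_WHA W ->
  is_star_rep W rho ->
  is_corep W v ->
  (forall i j, wS W (v i j) = wstar W (v j i)) ->
  (forall x z : 'I_dv * 'I_dr * 'I_dv,
     opcomp (op_tens_id (Pop W v rho)) (id_tens_op (Qop W v rho)) x z
     = opcomp (id_tens_op (Qop W v rho)) (op_tens_id (Pop W v rho)) x z) /\
  (forall x z : 'I_dr * 'I_dv * 'I_dr,
     opcomp (op_tens_id (Qop W v rho)) (id_tens_op (Pop W v rho)) x z
     = opcomp (id_tens_op (Pop W v rho)) (op_tens_id (Qop W v rho)) x z).
Proof.
move=> [[[WB _ _ _ _] _] _ _ _ _] [rho_linear rho_mul _] v_corep _.
have [[[_ mul1 mulDl mulDr] [_ eps_linear _ _]] _ comul2_one_l comul2_one_r eps_mul_weak] := WB.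
by split=> x z; [apply: Pop_Qop_commute | apply: Qop_Pop_commute].
Qed.
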